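(* Let $G=(V,E)$ be a finite simple graph and let $C\subseteq V$. Let $x$ be an optimal solution of the integer program $$\text{minimize }\sum_{v\in V}x_v\ \text{ subject to }\ \sum_{v\in V}x_v\geq1,\quad x_u-x_v+\sum_{w\in N(u)\setminus\{v\}}x_w\geq0\ \ \forall v\in V,\ u\in N(v),\quad x_v=0\ \ \forall v\in C,\quad x\in\{0,1\}^V,$$ and let $F=\{v\in V\colon x_v=1\}$. Then $F$ is a fort of $G$ with $F\subseteq V\setminus\mathrm{cl}(C)$, and $F$ has minimum cardinality among all forts of $G$ contained in $V\setminus\mathrm{cl}(C)$.
   Context: $N(u)$ denotes the neighborhood of $u$. A fort of $G$ is a non-empty set $F\subseteq V$ such that no vertex $u\in V\setminus F$ has exactly one neighbor in $F$. The closure $\mathrm{cl}(C)$ is the set of filled vertices obtained by starting with the vertices of $C$ filled and repeatedly applying the standard color change rule (a filled vertex $u$ forces a non-filled vertex $v$ to become filled if $v$ is the only non-filled neighbor of $u$) until no more forces are possible. *)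

From mathcomp Require Import all_boot all_order all_algebra.
Set Implicit Arguments. Unset Strict Implicit. Unset Printing Implicit Defensive.
Import GRing.Theory Num.Theory.

(* A finite simple graph: vertex set a finType T, adjacency adj : rel T,
   assumed symmetric and irreflexive in the theorem. *)

Definition nbhd (T : finType) (adj : rel T) (u : T) : {set T} := [set w | adj u w].

Definition is_fort (T : finType) (adj : rel T) (F : {set T}) : Prop :=
  F != set0 /\ forall u, u \notin F -> #|nbhd adj u :&: F| != 1%N.

Definition force_step (T : finType) (adj : rel T) (S : {set T}) : {set T} :=
  S :|: [set v | [exists u, (u \in S) && (nbhd adj u :\: S == [set v])]].

(* Closure: apply forcing until no more forces are possible; after #|T|
   rounds the process has stabilised. *)
Definition zf_closure (T : finType) (adj : rel T) (C : {set T}) : {set T} :=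
  iter #|T| (force_step adj) C.

Definition ip_feasible (T : finType) (adj : rel T) (C : {set T}) (x : T -> int) : Prop :=
  [/\ (forall v, x v = 0 \/ x v = 1),
      (1 <= \sum_(v : T) x v)%R,
      (forall v u, u \in nbhd adj v ->
          (0 <= x u - x v + \sum_(w in nbhd adj u :\ v) x w)%R)
    & (forall v, v \in C -> x v = 0)].

Definition ip_optimal (T : finType) (adj : rel T) (C : {set T}) (x : T -> int) : Prop :=
  ip_feasible adj C x /\
  forall y : T -> int, ip_feasible adj C y -> (\sum_(v : T) x v <= \sum_(v : T) y v)%R.

(* A 0/1 vector is feasible for the integer program exactly when its support
   is a fort avoiding C: the constraint for the pair (v, u) fails only when
   u is outside the support and v is its unique neighbour inside it.  Every
   fort avoiding C also avoids cl(C), since a vertex forced by a filled u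
   would be the only neighbour of u in the fort.  So the feasible supports are
   the forts avoiding cl(C), and an optimal solution picks a smallest one. *)

From mathcomp Require Import all_boot all_order all_algebra.

Set Implicit Arguments.
Unset Strict Implicit.
Unset Printing Implicit Defensive.

Import GRing.Theory Num.Theory.
Local Open Scope ring_scope.

Section ZeroForcing.

Variables (T : finType) (adj : rel T).

Lemma force_step_fort_avoid (F S : {set T}) :
  is_fort adj F -> F \subset ~: S -> F \subset ~: force_step adj S.
Proof.
move=> [_ fortF] FS; apply/subsetP => v vF.
have vS : v \notin S by rewrite -in_setC (subsetP FS).
rewrite !inE negb_or vS /=; apply/existsP => -[u /andP[uS /eqP forced]].
have uF : u \notin F by apply: contraL uS => uF; rewrite -in_setC (subsetP FS).
have NuF_sub : nbhd adj u :&: F \subset [set v].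
  rewrite -forced; apply/subsetP => w; rewrite !inE => /andP[-> wF].
  by rewrite -in_setC (subsetP FS).
have vNuF : v \in nbhd adj u :&: F.
  by have := set11 v; rewrite -forced !inE => /andP[_ ->].
have NuF : nbhd adj u :&: F = [set v] by apply/eqP; rewrite eqEsubset NuF_sub sub1set.
by have := fortF u uF; rewrite NuF cards1.
Qed.

Lemma zf_closure_fort_avoid (F C : {set T}) :
  is_fort adj F -> F \subset ~: C -> F \subset ~: zf_closure adj C.
Proof.
move=> fortF FC; rewrite /zf_closure; elim: #|T| => [|n IH] //=.
exact: force_step_fort_avoid.
Qed.

Lemma subset_zf_closure (C : {set T}) : C \subset zf_closure adj C.
Proof.
rewrite /zf_closure; elim: #|T| => [|n IH] //=.
exact: subset_trans IH (subsetUl _ _).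
Qed.

End ZeroForcing.

Section ZeroOneVectors.

Variables (T : finType) (x : T -> int).
Hypothesis x01 : forall v, x v = 0 \/ x v = 1.

Local Notation supp := [set v | x v == 1].

Lemma sum01_card (A : {set T}) : \sum_(w in A) x w = #|A :&: supp|%:Z.
Proof.
rewrite (big_setID supp) /= [X in _ + X]big1 ?addr0; last first.
  by move=> w; rewrite !inE => /andP[xw1 _]; case: (x01 w) => // xw; rewrite xw in xw1.
rewrite (eq_bigr (fun _ => 1)); last by move=> w; rewrite !inE => /andP[_ /eqP].
by rewrite sumr_const -natz.
Qed.

Lemma sum01_card_supp : \sum_v x v = #|supp|%:Z.
Proof.
rewrite -[supp]setTI -sum01_card.
by apply: eq_bigl => v; rewrite inE.
Qed.

Lemma notin_supp01 v : (v \notin supp) = (x v == 0).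
Proof. by rewrite inE; case: (x01 v) => ->. Qed.

Variable adj : rel T.
Hypothesis adj_sym : symmetric adj.

Lemma nbhd_sym u v : (u \in nbhd adj v) = (v \in nbhd adj u).
Proof. by rewrite !inE adj_sym. Qed.

Lemma neighbour_constraints01_fort :
  (forall v u, u \in nbhd adj v -> 0 <= x u - x v + \sum_(w in nbhd adj u :\ v) x w)
  <-> (forall u, u \notin supp -> #|nbhd adj u :&: supp| != 1%N).
Proof.
have card_split v u : v \in nbhd adj u -> x v = 1 ->
    #|nbhd adj u :&: supp| = #|(nbhd adj u :\ v) :&: supp|.+1.
  move=> vNu xv1; rewrite (cardsD1 v) in_setI vNu inE xv1 eqxx.
  by congr (_ + _)%N; apply: eq_card => w; rewrite !inE andbA.
split=> [constr u | fort v u].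
  rewrite notin_supp01 => /eqP xu0; apply/negP => /cards1P[v NuF].
  have /setIP[vNu] : v \in nbhd adj u :&: supp by rewrite NuF set11.
  rewrite inE => /eqP xv1.
  have /eqP : #|nbhd adj u :&: supp| = 1%N by rewrite NuF cards1.
  rewrite (card_split v u) // eqSS => /eqP rest0.
  by have := constr v u; rewrite nbhd_sym vNu sum01_card xu0 xv1 rest0 => /(_ isT).
rewrite nbhd_sym sum01_card => vNu.
have [xu|xu] := x01 u; last first.
  by rewrite xu; case: (x01 v) => ->.
have [xv|xv] := x01 v; first by rewrite xu xv.
have := fort u; rewrite notin_supp01 xu eqxx (card_split v u) // => /(_ isT).
by rewrite xv eqSS; case: #|_|.
Qed.

Lemma ip_feasible01_fort (C : {set T}) :
  ip_feasible adj C x <-> is_fort adj supp /\ supp \subset ~: C.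
Proof.
have nonempty : (1 <= \sum_v x v) = (supp != set0).
  by rewrite sum01_card_supp lez_nat card_gt0.
have avoidC : (forall v, v \in C -> x v = 0) <-> supp \subset ~: C.
  split=> [xC | suppC v vC].
    by apply/subsetP => v; rewrite !inE => /eqP xv1; apply/negP => /xC; rewrite xv1.
  apply/eqP; rewrite -notin_supp01; apply: contraL vC => vsupp.
  by rewrite -in_setC (subsetP suppC).
split=> [[_ sum1 constr xC] | [[supp0 fort] suppC]].
  split; last exact/avoidC.
  by split; [rewrite -nonempty | exact/neighbour_constraints01_fort].
split=> //; [by rewrite nonempty | exact/neighbour_constraints01_fort | exact/avoidC].
Qed.

End ZeroOneVectors.

Lemma indicator01 (T : finType) (S : {set T}) (v : T) :
  ((v \in S)%:R : int) = 0 \/ ((v \in S)%:R : int) = 1.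
Proof. by case: (v \in S); [right | left]. Qed.

Lemma supp_indicator (T : finType) (S : {set T}) :
  [set v | ((v \in S)%:R : int) == 1] = S.
Proof. by apply/setP => v; rewrite inE; case: (v \in S). Qed.

Theorem corollary5p4 (T : finType) (adj : rel T)
  (adj_sym : symmetric adj) (adj_irr : irreflexive adj)
  (C : {set T}) (x : T -> int) :
  ip_optimal adj C x ->
  let F := [set v | x v == 1%R] in
  [/\ is_fort adj F,
      F \subset ~: zf_closure adj C
    & forall F' : {set T}, is_fort adj F' -> F' \subset ~: zf_closure adj C ->
        (#|F| <= #|F'|)%N].
Proof.
move=> [feas_x opt_x] F.
have x01 : forall v, x v = 0 \/ x v = 1 by case: feas_x.
have [fortF FC] := (ip_feasible01_fort x01 adj_sym C).1 feas_x.
split=> // [|F' fortF' F'cl]; first exact: zf_closure_fort_avoid.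
pose y v : int := (v \in F')%:R.
have y01 : forall v, y v = 0 \/ y v = 1 by move=> v; apply: indicator01.
have F'C : F' \subset ~: C.
  by apply: subset_trans F'cl _; rewrite setCS subset_zf_closure.
have feas_y : ip_feasible adj C y.
  by apply/(ip_feasible01_fort y01 adj_sym); rewrite supp_indicator.
have := opt_x y feas_y.
by rewrite (sum01_card_supp x01) (sum01_card_supp y01) supp_indicator lez_nat.
Qed.
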